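(* Let $w, v \in \mathfrak{S}_n$ with $v \prec w$ in the Bruhat order, $\textsf{supp}(v) \subsetneq \textsf{supp}(w)$, and $B(w) \cong \mathbf{2} \times B(v)$, where $\mathbf{2}$ is the two-element chain, and let $i$ be the unique element of $\textsf{supp}(w) \setminus \textsf{supp}(v)$. Then the letter $i$ appears exactly once in every reduced word of $w$.
   Context: $\sigma_i$ ($1\le i\le n-1$) is the simple transposition swapping $i$ and $i+1$; products are compositions of maps. A reduced word of $w$ is a word $i_1\cdots i_\ell$ of minimal length $\ell$ with $w=\sigma_{i_1}\cdots\sigma_{i_\ell}$; $R(w)$ is the set of reduced words. $\textsf{supp}(w)$ is the set of letters appearing in (any) reduced word of $w$. Bruhat order: $v \preceq w$ iff some reduced word of $v$ is a subword of some reduced word of $w$; $B(w)=\{u : u \preceq w\}$. (It is known that under these hypotheses $\textsf{supp}(w)\setminus\textsf{supp}(v)$ is a singleton.) *)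

(* Permutations of {1..n} are modelled as 'S_n = {perm 'I_n},
   with point k (1-indexed) represented by the ordinal k-1. *)
From mathcomp Require Import all_boot all_fingroup.
Set Implicit Arguments. Unset Strict Implicit. Unset Printing Implicit Defensive.
Local Open Scope group_scope.

(* sigma n i : the simple transposition swapping i and i+1 (1-indexed),
   i.e. the ordinals i-1 and i; meaningful for 1 <= i <= n-1
   (identity otherwise, but words are required to use only valid letters). *)
Definition sigma (n i : nat) : 'S_n :=
  match @insub _ (fun k => k < n) _ i.-1, @insub _ (fun k => k < n) _ i with
  | Some a, Some b => tperm a b
  | _, _ => 1
  end.

Definition valid_word (n : nat) (s : seq nat) : bool :=
  all (fun i => (0 < i) && (i < n)) s.

(* word_perm n [:: i1; ...; il] = sigma_{i1} o ... o sigma_{il} (composition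
   of maps). In MathComp (p * q) x = q (p x), hence the order below. *)
Definition word_perm (n : nat) (s : seq nat) : 'S_n :=
  foldr (fun i p => p * sigma n i) 1 s.

Definition reduced_word (n : nat) (w : 'S_n) (s : seq nat) : Prop :=
  [/\ valid_word n s, word_perm n s = w &
      forall t, valid_word n t -> word_perm n t = w -> size s <= size t].

Definition in_supp (n : nat) (w : 'S_n) (i : nat) : Prop :=
  exists s, reduced_word w s /\ i \in s.

Definition bruhat_le (n : nat) (v w : 'S_n) : Prop :=
  exists sv sw, [/\ reduced_word v sv, reduced_word w sw & subseq sv sw].

Definition B (n : nat) (w : 'S_n) : 'S_n -> Prop := fun u => bruhat_le u w.

(* order on 2 x B(v): product order, 2 = {false < true} *)
Definition prod_le (n : nat) (x y : bool * 'S_n) : Prop :=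
  (x.1 ==> y.1) /\ bruhat_le x.2 y.2.

Definition iso_2_times (n : nat) (w v : 'S_n) : Prop :=
  exists f : 'S_n -> bool * 'S_n,
    [/\ (forall u, B w u -> B v (f u).2),
        (forall u1 u2, B w u1 -> B w u2 -> f u1 = f u2 -> u1 = u2),
        (forall b x, B v x -> exists2 u, B w u & f u = (b, x)) &
        (forall u1 u2, B w u1 -> B w u2 ->
           (bruhat_le u1 u2 <-> prod_le (f u1) (f u2)))].

(* By the isomorphism [B(w) = 2 x B(v)], a maximal chain of prefixes of a
   reduced word of [w] maps to a chain of [2 x B(v)] along which the rank
   [b + l(y)] strictly increases, so [l(w) <= l(v) + 1]; as [v < w], a reduced
   word of [v] is obtained from one of [w] by deleting a single letter [j].
   Let [F(x)] be the set of values of [x] in its first [i] positions.  Reading a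
   reduced word of [w] from the left is a walk [1 = x_0 < x_1 < ... < x_l = w]
   in the right weak order; [F] changes exactly at the letters [i], and every
   [x_k] has its inversions among those of [w].
   If [j <> i], then [F(w) = F(1)], and this inversion condition forces
   [F(x_k) = F(1)] all along, so no reduced word of [w] contains [i], contrary
   to [i \in supp(w)].
   If [j = i], write [w = a s_i b] with [a b] reduced and [i] not in [a], [b]:
   [F(w)] is [F(1)] with one value [P] exchanged for [Q], and the reducedness of
   [a b] rules out the inversions of [w] that would allow [F(x_k)] to be
   anything but [F(1)] or [F(w)].  Since [F] can only jump from [F(1)] to
   [F(w)], the letter [i] occurs exactly once. *)

From mathcomp Require Import all_boot all_fingroup zify.
Set Implicit Arguments. Unset Strict Implicit. Unset Printing Implicit Defensive.
Local Open Scope group_scope.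

Lemma subseq_size_succ (T : eqType) (s1 s2 : seq T) :
  subseq s1 s2 -> size s2 = (size s1).+1 ->
  exists a j b, s2 = a ++ j :: b /\ s1 = a ++ b.
Proof.
elim: s2 s1 => [|x s2 IH] [|y s1] //=.
  by move=> _ [/size0nil ->]; exists [::], x, [::].
case: eqP => [->|_] sub [size_s].
  by have [a [j [b [-> ->]]]] := IH _ sub size_s; exists (x :: a), j, b.
exists [::], x, s2; split=> //.
by apply/eqP; rewrite -(size_subseq_leqif sub) size_s.
Qed.

Section SymmetricGroup.
Variable n : nat.
Local Notation N := n.+1.
Local Notation word := (word_perm N).
Implicit Types (x y z w v : 'S_N) (s : seq nat).

(* In MathComp [(x * y) k = y (x k)], so [sigma N j * x] is the paper's [x s_j]:
   it swaps the entries of [x] in the positions [lo j] and [hi j].  Inversions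
   are recorded as pairs of values [c < d] with [d] placed before [c]. *)
Definition lo j : 'I_N := inord j.-1.
Definition hi j : 'I_N := inord j.

Lemma val_lo j : 0 < j < N -> lo j = j.-1 :> nat.
Proof. by move=> /andP[_ jN]; rewrite inordK //; lia. Qed.

Lemma val_hi j : 0 < j < N -> hi j = j :> nat.
Proof. by move=> /andP[_ jN]; rewrite inordK. Qed.

Lemma lo_neq_hi j : 0 < j < N -> lo j != hi j.
Proof.
by move=> hj; rewrite -(inj_eq (@ord_inj N)) val_lo // val_hi //; apply/eqP; lia.
Qed.

Lemma sigma_tperm j : 0 < j < N -> sigma N j = tperm (lo j) (hi j).
Proof.
move=> hj; have /andP[_ jN] := hj; rewrite /sigma.
case: insubP => [a _ Ea|/negP[]]; last by lia.
case: insubP => [b _ Eb|]; last by rewrite jN.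
suff [-> ->] : a = lo j /\ b = hi j by [].
by split; apply: ord_inj; rewrite ?Ea ?Eb ?val_lo ?val_hi.
Qed.

Lemma sigmaKg j x : 0 < j < N -> sigma N j * (sigma N j * x) = x.
Proof. by move=> hj; rewrite sigma_tperm // tpermKg. Qed.

Lemma word_perm_cat s1 s2 : word (s1 ++ s2) = word s2 * word s1.
Proof. by elim: s1 => [|j s1 IH] /=; rewrite ?mulg1 // IH mulgA. Qed.

Lemma valid_word_cat s1 s2 :
  valid_word N (s1 ++ s2) = valid_word N s1 && valid_word N s2.
Proof. exact: all_cat. Qed.

Lemma tpermE_nat (p q a : 'I_N) : tperm p q a =
  (if a == p :> nat then q : nat else if a == q :> nat then p : nat else a) :> nat.
Proof.
case: tpermP => [->|->|]; first by rewrite eqxx.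
  by case: eqP => [->|]; rewrite ?eqxx.
by move=> /eqP/negPf ap /eqP/negPf aq; rewrite !(inj_eq (@ord_inj N)) ap aq.
Qed.

Lemma ltn_tperm_adj (p q a b : 'I_N) : q = p.+1 :> nat ->
  (tperm p q a < tperm p q b) =
  ((a == q) && (b == p)) || ((a < b) && ~~ ((a == p) && (b == q))).
Proof.
rewrite !tpermE_nat -!(inj_eq (@ord_inj N)) => qp.
do ![case: eqP => ? /=]; apply/idP/idP; lia.
Qed.

(** * Inversions and length *)

Definition inversions x : {set 'I_N * 'I_N} :=
  [set p : 'I_N * 'I_N | (p.1 < p.2) && (x^-1 p.2 < x^-1 p.1)].

Definition ell x := #|inversions x|.

Definition ascent x j := x (lo j) < x (hi j).

Lemma inversionsE x c d : ((c, d) \in inversions x) = (c < d) && (x^-1 d < x^-1 c).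
Proof. by rewrite inE. Qed.

Lemma ell1 : ell 1 = 0.
Proof.
apply/eqP; rewrite cards_eq0; apply/eqP/setP => -[c d].
rewrite inversionsE invg1 !perm1 in_set0; apply/negbTE/negP => /andP[]; lia.
Qed.

Lemma inversions_ascent j x : 0 < j < N -> ascent x j ->
  inversions (sigma N j * x) = (x (lo j), x (hi j)) |: inversions x.
Proof.
move=> hj; rewrite /ascent => asc; apply/setP => -[c d].
rewrite in_setU1 !inversionsE invMg sigma_tperm // tpermV !permM.
rewrite ltn_tperm_adj; last by rewrite val_lo // val_hi //; lia.
rewrite -[c](permKV x) -[d](permKV x) !permK xpair_eqE !(inj_eq perm_inj).
move: (x^-1 c) (x^-1 d) => a b.
rewrite (andbC (b == hi j)) (andbC (b == lo j)).
have [/andP[/eqP-> /eqP->]|_] := boolP ((a == lo j) && (b == hi j)).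
  by rewrite asc.
have [/andP[/eqP-> /eqP->]|_] := boolP ((a == hi j) && (b == lo j)).
  by rewrite ltnNge (ltnW asc).
by rewrite andbT.
Qed.

Lemma ell_sigma_ascent j x : 0 < j < N -> ascent x j ->
  ell (sigma N j * x) = (ell x).+1.
Proof.
move=> hj asc; rewrite /ell inversions_ascent // cardsU1 inversionsE !permK.
by rewrite val_lo // val_hi // [_ < j.-1]ltnNge leq_pred andbF.
Qed.

Lemma ascent_sigma j x : 0 < j < N -> ascent (sigma N j * x) j = ~~ ascent x j.
Proof.
move=> hj; rewrite /ascent !permM sigma_tperm // tpermL tpermR ltnNge leq_eqVlt.
by rewrite (inj_eq (@ord_inj N)) (inj_eq perm_inj) (negbTE (lo_neq_hi hj)).
Qed.

Lemma ell_sigma_descent j x : 0 < j < N -> ~~ ascent x j ->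
  ell x = (ell (sigma N j * x)).+1.
Proof.
by move=> hj hx; rewrite -{1}(sigmaKg x hj) ell_sigma_ascent // ascent_sigma.
Qed.

Fixpoint ascending x s : bool :=
  if s is j :: s' then ascent x j && ascending (sigma N j * x) s' else true.

Lemma ascending_cat x s1 s2 :
  ascending x (s1 ++ s2) = ascending x s1 && ascending (word s1 * x) s2.
Proof.
elim: s1 x => [|j s1 IH] x /=; first by rewrite mul1g.
by rewrite IH -mulgA andbA.
Qed.

Lemma ell_word_mul s x : valid_word N s ->
  ell (word s * x) <= ell x + size s ?= iff ascending x s.
Proof.
elim: s x => [|j s IH] x /=; first by rewrite mul1g addn0; apply/leqif_refl.
case/andP=> hj /(IH (sigma N j * x)); rewrite -mulgA.
have [asc|dsc] := boolP (ascent x j) => /= le_s.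
  by rewrite ell_sigma_ascent // addSnnS in le_s.
apply/leqifP; rewrite (ell_sigma_descent hj dsc).
by apply: leq_ltn_trans le_s.1 _; rewrite addSn addnS ltnS leqnSn.
Qed.

Lemma inversions_ascending x s : valid_word N s -> ascending x s ->
  inversions x \subset inversions (word s * x).
Proof.
elim: s x => [|j s IH] x /=; first by rewrite mul1g.
case/andP=> hj vs /andP[asc run]; rewrite -mulgA.
by apply: subset_trans (IH _ vs run); rewrite inversions_ascent // subsetUr.
Qed.

(** A new inversion [(c, d)] of an ascending walk from [x] is created by a
    letter that swaps [c] and [d]; at that letter the walk from [x * t] swaps
    [t c] and [t d], and it is ascending there. *)
Lemma ascending_new_inversion x (t : 'S_N) s (c d : 'I_N) : valid_word N s ->
  ascending x s -> ascending (x * t) s ->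
  (c, d) \notin inversions x -> (c, d) \in inversions (word s * x) -> t c < t d.
Proof.
elim: s x => [|j s IH] x /=; first by rewrite mul1g => _ _ _ /negPf->.
case/andP=> hj vs /andP[asc run] /andP[asct runt] cd_x; rewrite -mulgA.
have [cd_sx|] := boolP ((c, d) \in inversions (sigma N j * x)); last first.
  by apply: IH => //; rewrite -mulgA.
move: cd_sx; rewrite inversions_ascent // in_setU1 (negbTE cd_x) orbF.
by case/eqP=> -> ->; rewrite -!permM.
Qed.

(** Without descents [a <= x a] for every [a], by induction on [a]; both sides
    have the same sum over ['I_N], hence are equal. *)
Lemma ascents_perm1 x : (forall j, 0 < j < N -> ascent x j) -> x = 1.
Proof.
move=> asc.
have ge_x k (a : 'I_N) : a = k :> nat -> k <= x a.
  elim: k a => // k IH a Ea.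
  have hj : 0 < k.+1 < N by rewrite ltn0Sn -Ea ltn_ord.
  have -> : a = hi k.+1 by apply: ord_inj; rewrite val_hi.
  by have := asc _ hj; have := IH (lo k.+1) (val_lo hj); rewrite /ascent; lia.
have := @leqif_sum 'I_N predT (fun a => a == x a :> nat) _ _
  (fun a _ => leqif_eq (ge_x _ a erefl)).
rewrite {1}(reindex_inj (@perm_inj _ x)) => -[_].
rewrite eqxx => /esym/forall_inP eq_x.
by apply/permP => a; apply: ord_inj; rewrite perm1 (eqP (eq_x a _)).
Qed.

Lemma exists_word x : exists s, [/\ valid_word N s, word s = x & size s = ell x].
Proof.
have [k] := ubnP (ell x); elim: k x => // k IH x ell_x.
case: (pickP (fun j : 'I_N => (0 < j) && ~~ ascent x j)) => [j|asc].
  case/andP=> j0 dsc.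
  have hj : 0 < j < N by rewrite j0 ltn_ord.
  have := ell_sigma_descent hj dsc; set y := sigma N j * x => ell_y.
  have [|s [vs ws size_s]] := IH y; first by move: ell_x; rewrite ell_y.
  exists (s ++ [:: nat_of_ord j]); split.
  - by rewrite valid_word_cat vs /= hj.
  - by rewrite word_perm_cat ws /= mul1g sigmaKg.
  - by rewrite size_cat size_s ell_y addn1.
suff -> : x = 1 by exists [::]; rewrite ell1.
apply: ascents_perm1 => j /andP[j0 jN]; have := asc (Ordinal jN).
by rewrite /= j0 => /negbFE.
Qed.

Lemma reduced_word_size x s : reduced_word x s -> size s = ell x.
Proof.
case=> vs <- min; apply/eqP; rewrite eqn_leq; apply/andP; split.
  by have [t [vt wt <-]] := exists_word (word s); apply: min.
by have [le _] := ell_word_mul 1 vs; rewrite mulg1 ell1 in le.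
Qed.

Lemma reduced_word_ascending x s : reduced_word x s -> ascending 1 s.
Proof.
move=> rs; have := reduced_word_size rs; case: rs => vs <- _.
by have := ell_word_mul 1 vs; rewrite mulg1 ell1 => -[_ <-] ->; rewrite eqxx.
Qed.

Lemma bruhat_ell y z : bruhat_le y z -> ell y <= ell z ?= iff (y == z).
Proof.
case=> sy [sz [ry rz sub]]; have [le eq_s] := size_subseq_leqif sub.
rewrite (reduced_word_size ry) (reduced_word_size rz) in le eq_s; split=> //.
apply/eqP/eqP=> [/eqP|-> //]; rewrite eq_s => /eqP eq_yz.
by case: ry rz => _ <- _ [_ <- _]; rewrite eq_yz.
Qed.

Lemma reduced_word_take x s k :
  reduced_word x s -> reduced_word (word (take k s)) (take k s).
Proof.
case=> vs ws min; move: vs; rewrite -{1}(cat_take_drop k s) valid_word_cat.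
case/andP=> vt vd; split=> // t vt' wt.
have := min (t ++ drop k s); rewrite valid_word_cat vt' vd word_perm_cat wt.
rewrite -word_perm_cat cat_take_drop => /(_ isT ws).
by rewrite -{1}(cat_take_drop k s) !size_cat leq_add2r.
Qed.

Definition rank (p : bool * 'S_N) := p.1 + ell p.2.

Lemma rank_lt p q : prod_le p q -> p != q -> rank p < rank q.
Proof.
case: p q => [b y] [c z] [/= bc /bruhat_ell [le_yz eq_yz]] ne.
have [eyz|nyz] := eqVneq y z.
  by move: ne bc; rewrite eyz /rank; case: b; case: c; rewrite ?eqxx.
move: eq_yz; rewrite (negbTE nyz) => /negbT neq_ell.
have lt_yz : ell y < ell z by rewrite ltn_neqAle neq_ell le_yz.
by move: bc; rewrite /rank /=; case: (b); case: (c) => //= _; lia.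
Qed.

Lemma iso_2_times_ell w v s :
  iso_2_times w v -> reduced_word w s -> ell w <= (ell v).+1.
Proof.
case=> f [f_B f_inj _ f_mono] rs.
pose u k := word (take k s).
have ru k : reduced_word (u k) (take k s) by apply: reduced_word_take rs.
have Bu k : B w (u k) by exists (take k s), s; split=> //; apply: take_subseq.
have ell_u k : k <= size s -> ell (u k) = k.
  by move=> ks; rewrite -(reduced_word_size (ru k)) size_take_min; apply/minn_idPl.
have rank_u k : k <= size s -> k <= rank (f (u k)).
  elim: k => // k IH ks; apply: leq_ltn_trans (IH (ltnW ks)) _.
  apply: rank_lt.
    apply/f_mono => //; exists (take k s), (take k.+1 s); split=> //.
    by rewrite -(take_takel s (leqnSn k)) take_subseq.
  apply/eqP => /(f_inj _ _ (Bu k) (Bu k.+1)) eq_u.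
  by move: (ell_u _ ks); rewrite -eq_u ell_u ?(ltnW ks); lia.
have := rank_u _ (leqnn (size s)); rewrite /u take_size.
case: (rs) => _ -> _; rewrite -(reduced_word_size rs) => /leq_trans; apply.
have /f_B/bruhat_ell[le_v _] : B w w by exists s, s; split.
by rewrite /rank; case: (f w) le_v => -[] y /=; lia.
Qed.

(** * The values in the first [i] positions *)

Section Front.
Variable i : nat.
Hypothesis i_valid : 0 < i < N.

Definition front x : {set 'I_N} := [set c | x^-1 c < i].

Lemma mem_front x c : (c \in front x) = (x^-1 c < i).
Proof. by rewrite inE. Qed.

Lemma mem_front1 c : (c \in front 1) = (c < i).
Proof. by rewrite mem_front invg1 perm1. Qed.

Lemma card_front x : #|front x| = i.
Proof.
have -> : front x = x^-1 @^-1: front 1 by apply/setP => c; rewrite !inE invg1 perm1.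
rewrite card_preimset; last exact: perm_inj.
have i_le_N : i <= N by case/andP: i_valid => _ /ltnW.
have -> : front 1 = widen_ord i_le_N @: [set: 'I_i].
  apply/setP => c; rewrite mem_front1.
  apply/idP/imsetP => [ci|[a _ ->]]; last exact: (ltn_ord a).
  by exists (Ordinal ci); rewrite ?inE //; apply: ord_inj.
rewrite card_imset ?cardsT ?card_ord // => a b /(congr1 (@nat_of_ord N)) /= eq_ab.
exact: ord_inj.
Qed.

Lemma front_sigma_other j x : 0 < j < N -> j != i ->
  front (sigma N j * x) = front x.
Proof.
move=> hj ji; apply/setP => c; rewrite !mem_front invMg sigma_tperm // tpermV.
rewrite permM tpermE_nat val_lo // val_hi //; move: (nat_of_ord _) => a.
by do ![case: eqP => ? /=]; move: ji i_valid hj => /eqP; lia.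
Qed.

Lemma front_word_notin s x : valid_word N s -> i \notin s ->
  front (word s * x) = front x.
Proof.
elim: s x => [|j s IH] x /=; first by rewrite mul1g.
case/andP=> hj vs; rewrite in_cons negb_or eq_sym => /andP[ji ns].
by rewrite -mulgA IH // front_sigma_other.
Qed.

Lemma front_sigma x : front (sigma N i * x) = x (hi i) |: (front x :\ x (lo i)).
Proof.
apply/setP => c; rewrite in_setU1 in_setD1 !mem_front invMg sigma_tperm // tpermV.
rewrite permM -[c](permKV x) !permK !(inj_eq perm_inj) tpermE_nat.
rewrite -!(inj_eq (@ord_inj N)) val_lo // val_hi //; move: (nat_of_ord _) => a.
by do ![case: eqP => ? /=]; move: i_valid; lia.
Qed.

Lemma front_lo x : x (lo i) \in front x.
Proof. by rewrite mem_front permK val_lo //; case/andP: i_valid => /prednK <-. Qed.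

Lemma front_hi x : x (hi i) \notin front x.
Proof. by rewrite mem_front permK val_hi // ltnn. Qed.

Lemma front_crossing_inversion y (c d : 'I_N) :
  c < d -> d \in front y -> c \notin front y -> (c, d) \in inversions y.
Proof. by rewrite inversionsE !mem_front => -> /=; lia. Qed.

Lemma front_inversion_closed w (c d : 'I_N) :
  (c, d) \in inversions w -> c \in front w -> d \in front w.
Proof. by rewrite inversionsE !mem_front => /andP[_]; lia. Qed.

Definition front_two_valued w := forall y,
  inversions y \subset inversions w -> front y = front 1 \/ front y = front w.

Lemma count_ascending w s x : front_two_valued w ->
  valid_word N s -> ascending x s -> word s * x = w ->
  count_mem i s = (front x != front w).
Proof.
move=> two; elim: s x => [|j s IH] x /=.
  by rewrite mul1g => _ _ ->; rewrite eqxx.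
case/andP=> hj vs /andP[asc run]; rewrite -mulgA => ws; rewrite (IH _ vs run ws).
have [eq_ji|ji] := eqVneq j i; last by rewrite front_sigma_other.
subst j.
have sub_sx : inversions (sigma N i * x) \subset inversions w.
  by rewrite -ws; apply: inversions_ascending.
have sub_x : inversions x \subset inversions w.
  by apply: subset_trans sub_sx; rewrite inversions_ascent // subsetUr.
have lo_sx : x (lo i) \notin front (sigma N i * x).
  by rewrite front_sigma in_setU1 in_setD1 eqxx /= orbF (inj_eq perm_inj) lo_neq_hi.
have hi_sx : x (hi i) \in front (sigma N i * x) by rewrite front_sigma setU11.
have ne_x_sx : front x != front (sigma N i * x).
  by apply: contraNneq lo_sx => <-; apply: front_lo.
case: (two _ sub_x) (two _ sub_sx) ne_x_sx => -> [] E; rewrite E ?eqxx //.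
  by move=> ->.
by move: lo_sx hi_sx asc; rewrite E !mem_front1 /ascent; lia.
Qed.

Lemma front_subset_eq x y : front x \subset front y -> front x = front y.
Proof. by move=> sub; apply/eqP; rewrite eqEcard sub !card_front leqnn. Qed.

Lemma front_inversions_cross y w (c d : 'I_N) :
  inversions y \subset inversions w -> c < d ->
  d \in front y -> c \notin front y -> c \in front w -> d \in front w.
Proof.
move=> sub cd dy cy.
by apply/front_inversion_closed/(subsetP sub)/front_crossing_inversion.
Qed.

Lemma front_fixed_two_valued w : front w = front 1 -> front_two_valued w.
Proof.
move=> Fw y sub; left; apply: front_subset_eq; apply/subsetP => d dy.
apply: contraT => dL; have /subsetPn[e eL ey] : ~~ (front 1 \subset front y).
  by apply: contra dL => /front_subset_eq ->.
have lt_ed : e < d by move: eL dL; rewrite !mem_front1; lia.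
have := front_inversions_cross sub lt_ed dy ey.
by rewrite Fw eL (negbTE dL) => /(_ isT).
Qed.

Section Swapped.
Variables (w : 'S_N) (P Q : 'I_N).
Hypotheses (PL : P \in front 1) (QL : Q \notin front 1).
Hypothesis Fw : front w = Q |: (front 1 :\ P).
Hypothesis W1 : forall e, e \in front 1 -> e != P -> (e, Q) \in inversions w -> e < P.
Hypothesis W2 : forall f, f \notin front 1 -> f != Q -> (P, f) \in inversions w -> Q < f.

Let mem_Fw c : (c \in front w) = (c == Q) || (c != P) && (c \in front 1).
Proof. by rewrite Fw in_setU1 in_setD1. Qed.

Let lt_front1 e f : e \in front 1 -> f \notin front 1 -> e < f.
Proof. by rewrite !mem_front1; lia. Qed.

Let swapped_cross y : inversions y \subset inversions w ->
  (front 1 :\: front y \subset [set P]) || (front y :\: front 1 \subset [set Q]).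
Proof.
move=> sub; apply: contraT => /norP[/subsetPn[e] + + /subsetPn[d]].
rewrite !in_setD !in_set1 => /andP[ey eL] eP /andP[dL dy] dQ.
have := front_inversions_cross sub (lt_front1 eL dL) dy ey.
by rewrite !mem_Fw eP eL (negbTE dL) (negbTE dQ) orbT andbF => /(_ isT).
Qed.

Let swapped_up y : inversions y \subset inversions w ->
  P \notin front y -> Q \notin front y -> front y \subset front 1.
Proof.
move=> sub Py Qy; apply/subsetP => d dy; apply: contraT => dL.
have dQ : d != Q by apply: contraNneq Qy => <-.
have Qd : Q < d.
  by apply: W2 => //; apply/(subsetP sub)/front_crossing_inversion => //; apply: lt_front1.
have := front_inversions_cross sub Qd dy Qy.
by rewrite !mem_Fw eqxx (negbTE dQ) (negbTE dL) andbF => /(_ isT).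
Qed.

Let swapped_down y : inversions y \subset inversions w ->
  P \in front y -> Q \in front y -> front 1 \subset front y.
Proof.
move=> sub Py Qy; apply/subsetP => e eL; apply: contraT => ey.
have eP : e != P by apply: contraNneq ey => ->.
have eP' : e < P.
  by apply: W1 => //; apply/(subsetP sub)/front_crossing_inversion => //; apply: lt_front1.
have PQ : P != Q by apply: contraNneq QL => <-.
have := front_inversions_cross sub eP' Py ey.
by rewrite !mem_Fw eP eL (negbTE PQ) eqxx orbT => /(_ isT).
Qed.

Lemma front_swapped_two_valued : front_two_valued w.
Proof.
move=> y sub.
have [Py|Py] := boolP (P \in front y); have [Qy|Qy] := boolP (Q \in front y).
- by left; apply/esym/front_subset_eq/swapped_down.
- left; case/orP: (swapped_cross sub) => [/subsetP EP|/subsetP DQ].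
    apply/esym/front_subset_eq/subsetP => c cL; apply: contraT => cy.
    move: (EP c); rewrite in_setD cy cL in_set1 => /(_ isT)/eqP cP.
    by rewrite cP Py in cy.
  apply/front_subset_eq/subsetP => c cy; apply: contraT => cL.
  move: (DQ c); rewrite in_setD cy cL in_set1 => /(_ isT)/eqP cQ.
  by rewrite -cQ cy in Qy.
- right; case/orP: (swapped_cross sub) => [/subsetP EP|/subsetP DQ].
    apply/esym/front_subset_eq/subsetP => c.
    rewrite mem_Fw => /orP[/eqP->//|/andP[cP cL]]; apply: contraT => cy.
    by move: (EP c); rewrite in_setD cy cL in_set1 (negbTE cP) => /(_ isT).
  apply/front_subset_eq/subsetP => c cy; rewrite mem_Fw.
  have [cL|cL] := boolP (c \in front 1).
    by rewrite andbT (_ : c != P) ?orbT //; apply: contraNneq Py => <-.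
  by move: (DQ c); rewrite in_setD cy cL in_set1 => /(_ isT) ->.
- by left; apply/front_subset_eq/swapped_up.
Qed.

End Swapped.

Lemma count_reduced_word w s : front_two_valued w -> reduced_word w s ->
  count_mem i s = (front 1 != front w).
Proof.
move=> two rs; have run := reduced_word_ascending rs.
by case: rs => vs ws _; apply: count_ascending; rewrite ?mulg1.
Qed.

Section Inserted.
Variables a b : seq nat.
Hypotheses (va : valid_word N a) (vb : valid_word N b).
Hypotheses (ia : i \notin a) (ib : i \notin b).
Local Notation A := (word a).
Local Notation z := (sigma N i * word a).
Local Notation P := (word a (lo i)).
Local Notation Q := (word a (hi i)).
Hypotheses (run_z : ascending z b) (run_A : ascending A b).

Let PL : P \in front 1.
Proof. by rewrite -[A]mulg1 -(front_word_notin 1 va ia) front_lo. Qed.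

Let QL : Q \notin front 1.
Proof. by rewrite -[A]mulg1 -(front_word_notin 1 va ia) front_hi. Qed.

Let front_z : front z = Q |: (front 1 :\ P).
Proof. by rewrite front_sigma -[A]mulg1 front_word_notin. Qed.

Let z_P : z^-1 P = hi i.
Proof. by rewrite invMg permM permK sigma_tperm // tpermV tpermL. Qed.

Let z_Q : z^-1 Q = lo i.
Proof. by rewrite invMg permM permK sigma_tperm // tpermV tpermR. Qed.

Lemma front_inserted : front (word b * z) = Q |: (front 1 :\ P).
Proof. by rewrite front_word_notin. Qed.

(** The inversion [(c, d)] of [word b * z] is created by a letter of [b]; the
    ascending walk along [b] from [A = z * tperm P Q] passes the same letter with
    [tperm P Q c] and [tperm P Q d] in the swapped positions. *)
Let new_inversion c d : (c, d) \notin inversions z ->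
  (c, d) \in inversions (word b * z) -> tperm P Q c < tperm P Q d.
Proof.
move=> cd_z cd_w; apply: ascending_new_inversion cd_z cd_w => //.
by rewrite sigma_tperm // -tpermJ conjgE !mulgA mulgK tperm2 mul1g.
Qed.

Let inserted_W1 e : e \in front 1 -> e != P ->
  (e, Q) \in inversions (word b * z) -> e < P.
Proof.
move=> eL eP eQ_w; have eQ : e != Q by apply: contraTneq eL => ->.
have := new_inversion _ eQ_w; rewrite tpermR tpermD ?(eq_sym P) ?(eq_sym Q) //; apply.
rewrite inversionsE z_Q val_lo //.
rewrite negb_and; apply/orP; right; rewrite -leqNgt.
have : e \in front z by rewrite front_z in_setU1 in_setD1 eP eL orbT.
by rewrite mem_front => ez; rewrite -ltnS prednK //; case/andP: i_valid.
Qed.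

Let inserted_W2 f : f \notin front 1 -> f != Q ->
  (P, f) \in inversions (word b * z) -> Q < f.
Proof.
move=> fL fQ Pf_w; have fP : f != P by apply: contraNneq fL => ->.
have := new_inversion _ Pf_w; rewrite tpermL tpermD ?(eq_sym P) ?(eq_sym Q) //; apply.
rewrite inversionsE z_P val_hi //.
rewrite negb_and; apply/orP; right.
by rewrite -mem_front front_z in_setU1 in_setD1 fP (negbTE fL) (negbTE fQ).
Qed.

Lemma inserted_two_valued : front_two_valued (word b * z).
Proof. exact: front_swapped_two_valued PL QL front_inserted inserted_W1 inserted_W2. Qed.

Lemma front_inserted_neq1 : front 1 != front (word b * z).
Proof. by rewrite front_inserted; apply: contraNneq QL => ->; rewrite setU11. Qed.

End Inserted.

Lemma count_reduced_word_inserted w a b s :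
  reduced_word w (a ++ i :: b) -> ascending 1 (a ++ b) -> i \notin a ++ b ->
  reduced_word w s -> count_mem i s = 1%N.
Proof.
move=> rw run_ab; rewrite mem_cat negb_or => /andP[ia ib] rs.
have run_w := reduced_word_ascending rw; case: rw => + ws _.
rewrite valid_word_cat => /andP[va /andP[_ vb]].
move: run_w run_ab; rewrite !ascending_cat mulg1 /= => /and3P[_ _ run_z] /andP[_ run_A].
have Ew : word b * (sigma N i * word a) = w by rewrite -ws word_perm_cat /= mulgA.
rewrite -{}Ew in rs.
have two := inserted_two_valued va vb ia ib run_z run_A.
by rewrite (count_reduced_word two rs) front_inserted_neq1.
Qed.

End Front.

Lemma count_mem_new_support w v i s : bruhat_le v w -> v != w -> iso_2_times w v ->
  in_supp w i -> ~ in_supp v i -> reduced_word w s -> count_mem i s = 1%N.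
Proof.
move=> vw nvw iso [s0 [rs0 is0]] nsupp rs.
have i_valid : 0 < i < N by case: rs0 => /allP/(_ _ is0).
have [sv [sw [rv rw sub]]] := vw.
have size_sw : size sw = (size sv).+1.
  have [le_vw] := bruhat_ell vw; rewrite (negbTE nvw) => /negbT ne_vw.
  have := iso_2_times_ell iso rw; rewrite (reduced_word_size rv) (reduced_word_size rw).
  by move: le_vw ne_vw; lia.
have [a [j [b [Esw Esv]]]] := subseq_size_succ sub size_sw.
have i_ab : i \notin a ++ b.
  by apply/negP => i_sv; apply: nsupp; exists sv; split; rewrite // Esv.
have [eq_ji|ne_ji] := eqVneq j i.
  subst j; rewrite Esw in rw; rewrite Esv in rv.
  exact: count_reduced_word_inserted rw (reduced_word_ascending rv) i_ab rs.
have i_sw : i \notin sw by rewrite Esw mem_cat in_cons eq_sym (negbTE ne_ji) -mem_cat.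
have Fw : front i w = front i 1.
  by case: rw => vsw <- _; rewrite -[word sw]mulg1 front_word_notin.
have := count_reduced_word i_valid (front_fixed_two_valued i_valid Fw) rs0.
by rewrite Fw eqxx => /count_memPn; rewrite is0.
Qed.

End SymmetricGroup.

Theorem corollary2p2 (n : nat) (w v : 'S_n) :
  bruhat_le v w -> v <> w ->
  (forall j, in_supp v j -> in_supp w j) ->
  (exists j, in_supp w j /\ ~ in_supp v j) ->
  iso_2_times w v ->
  forall i : nat, in_supp w i -> ~ in_supp v i ->
  forall s : seq nat, reduced_word w s -> count_mem i s = 1%N.
Proof.
case: n w v => [|n] w v vw /eqP nvw _ _ iso i supp_w nsupp_v s rs.
  by case: supp_w => s0 [[/allP vs0 _ _] /vs0 /andP[_]]; rewrite ltn0.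
exact: count_mem_new_support vw nvw iso supp_w nsupp_v rs.
Qed.
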